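(* Let $\Omega$ be a pointed solid closed convex cone in a finite-dimensional real inner product space $X$ with $\Omega^*$ facially compact and locally smooth, and $1\le j\le d$. Let $(E,F),(E,F_k^i)\in\mathcal P_j$ for $k\in\mathbb N$, $i=0,1$, with $F_k^i\to F$ (Fell topology) as $k\to\infty$, and let $\varepsilon_k\to0^+$. If the limit $v=\lim_k\varepsilon_k^{-1}\bigl(e_{F_k^0}(E)-e_{F_k^1}(E)\bigr)$ exists, then $v\in E_{1/2}(F)$.
   Context: $A^*=\{y:\langle y,a\rangle\ge0\ \forall a\in A\}$, $A^\circledast=A^*\cap\operatorname{span}A$. Faces: subsets $F$ of a convex set such that every segment with midpoint in $F$ lies in $F$. $0=n_0<\dots<n_d=\dim X$ are the dimensions of faces of $\Omega^*$, $P_j$ the faces of dimension $n_{d-j}$ with the Fell topology (from closed subsets of $X$); facially compact: each $P_j$ compact. Modular face of a cone $C$: a face $E$ containing a face of dimension $\max\{\dim G:G\text{ face of }C,\dim G<\dim E\}$; smooth: relative interiors of those maximal-dimensional proper faces consist of regular points of $E$; locally smooth: all modular faces smooth. $\mathcal P_j=\{(E,F)\in P_{j-1}\times P_j:E\supset F\}$; $e_F(E)$ is the unit generator of the extreme ray $F^\perp\cap E^\circledast$ of $E^\circledast$; $E_{1/2}(F)=\operatorname{span}(E)\cap F^\perp\cap e_F(E)^\perp$. *)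

From HB Require Import structures.
From mathcomp Require Import all_boot all_order all_algebra.
From mathcomp Require Import all_classical all_reals all_analysis.
Import Order.TTheory GRing.Theory Num.Theory numFieldNormedType.Exports.

Set Implicit Arguments.
Unset Strict Implicit.
Unset Printing Implicit Defensive.

Local Open Scope classical_set_scope.
Local Open Scope ring_scope.

Section ConeDefs.
Context {R : realType} {n : nat}.
Local Notation X := 'rV[R]_n.

Definition dotv (u v : X) : R := \sum_(i < n) u 0 i * v 0 i.

Definition orth (A : set X) : set X := [set y | forall a, A a -> dotv y a = 0].

Definition dual (A : set X) : set X := [set y | forall a, A a -> 0 <= dotv y a].

Definition span (A : set X) : set X :=
  [set x | exists (k : nat) (v : 'I_k -> X) (c : 'I_k -> R),
      (forall i, A (v i)) /\ x = \sum_(i < k) c i *: v i].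

Definition dualspan (A : set X) : set X := dual A `&` span A.

(** dim (span A) = k : there are k linearly independent vectors of A
    spanning every element of A *)
Definition has_dim (A : set X) (k : nat) : Prop :=
  exists M : 'M[R]_(k, n),
    [/\ forall i, A (row i M), row_free M & forall x, A x -> (x <= M)%MS].

Definition convex_set (A : set X) : Prop :=
  forall x y (t : R), A x -> A y -> 0 <= t <= 1 -> A ((1 - t) *: x + t *: y).

Definition closed_convex_cone (C : set X) : Prop :=
  [/\ C !=set0, closed C, convex_set C & forall x (t : R), C x -> 0 <= t -> C (t *: x)].

Definition pointed_cone (C : set X) : Prop := forall x, C x -> C (- x) -> x = 0.

Definition solid (C : set X) : Prop := interior C !=set0.

Definition is_face (C F : set X) : Prop :=
  [/\ F `<=` C, F !=set0, convex_set F &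
      forall x y, C x -> C y -> F ((2%:R)^-1 *: (x + y)) ->
        forall t : R, 0 <= t <= 1 -> F ((1 - t) *: x + t *: y)].

Definition face_dim_seq (C : set X) (ns : seq nat) : Prop :=
  sorted ltn ns /\ forall k, (k \in ns) <-> exists F, is_face C F /\ has_dim F k.

(** P_j : faces of C of dimension n_{d-j}, where d = size ns - 1 *)
Definition Pj (C : set X) (ns : seq nat) (j : nat) : set (set X) :=
  [set F | is_face C F /\ has_dim F (nth 0%N ns ((size ns).-1 - j))].

Definition Pcal (C : set X) (ns : seq nat) (j : nat) : set (set X * set X) :=
  [set EF | [/\ Pj C ns j.-1 EF.1, Pj C ns j EF.2 & EF.2 `<=` EF.1]].

(** relative interior of G (interior within span G = aff G) *)
Definition relint (G : set X) : set X :=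
  [set x | G x /\ exists e : R, 0 < e /\
     forall y, span G y -> dotv (y - x) (y - x) < e -> G y].

(** regular point x of the convex cone E: the normal cone of E at x
    (taken inside span E) is a single ray *)
Definition regular_point (E : set X) (x : X) : Prop :=
  E x /\ has_dim [set y | dualspan E y /\ dotv y x = 0] 1.

Definition maxdim_below (C : set X) (m k : nat) : Prop :=
  [/\ (m < k)%N, exists G, is_face C G /\ has_dim G m &
      forall H l, is_face C H -> has_dim H l -> (l < k)%N -> (l <= m)%N].

Definition modular_face (C E : set X) : Prop :=
  is_face C E /\ exists k m, [/\ has_dim E k, maxdim_below C m k &
     exists G, [/\ is_face C G, G `<=` E & has_dim G m]].

Definition smooth_face (C E : set X) : Prop :=
  forall k m, has_dim E k -> maxdim_below C m k ->
    forall G, is_face C G -> G `<=` E -> has_dim G m ->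
      forall x, relint G x -> regular_point E x.

Definition locally_smooth (C : set X) : Prop :=
  forall E, modular_face C E -> smooth_face C E.

Definition eF (E F : set X) : X :=
  xget 0 [set e | dotv e e = 1 /\
     dualspan E `&` orth F = [set t *: e | t in [set t : R | 0 <= t]]].

Definition Ehalf (E F : set X) : set X :=
  span E `&` orth F `&` orth [set eF E F].

(** The Fell topology on subsets of X, generated by the subbasic sets
    {A | A \cap K = empty} (K compact) and {A | A \cap U nonempty} (U open) *)
Definition fell_idx : Type := (bool * set X)%type.
HB.instance Definition _ := Choice.on fell_idx.
HB.instance Definition _ := isPointed.Build fell_idx (true, set0).

Definition fell : Type := set X.
HB.instance Definition _ := Choice.on fell.

Definition fell_D : set fell_idx :=
  [set i | if i.1 then compact i.2 else open i.2].
Definition fell_b (i : fell_idx) : set fell :=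
  if i.1 then [set A : fell | A `&` i.2 = set0]
  else [set A : fell | A `&` i.2 !=set0].

HB.instance Definition _ := isSubBaseTopological.Build fell fell_D fell_b.

Definition facially_compact (C : set X) (ns : seq nat) : Prop :=
  forall j, (j <= (size ns).-1)%N -> compact (Pj C ns j : set fell).

End ConeDefs.

(* Local smoothness makes e_G(E) well defined for (E, G) in P_j: a relative
   interior point x of G is a regular point of the modular face E, and every
   normal of E at x is orthogonal to G, so E^⊛ ∩ G^⊥ is the ray spanned by a
   unique unit vector.  This uniqueness, compactness of the unit sphere and the
   fact that Fell convergence G_k → F approximates every point of F by points
   of G_k give e_{G_k}(E) → e_F(E).  The difference quotients lie in span E.
   Against f ∈ F, approximated by f' ∈ F^1_k, the quotient equals
   ε_k^{-1}<e_{F^0_k}(E), f'> >= 0 up to a small error, and symmetrically, so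
   v ⊥ F.  Finally <v, 2 e_F(E)> is the limit of the quotients paired with
   e_{F^0_k}(E) + e_{F^1_k}(E), which vanish because both vectors are unit. *)

From Pilot Require Import Defs.
From HB Require Import structures.
From mathcomp Require Import all_boot all_order all_algebra.
From mathcomp Require Import all_classical all_reals all_analysis.
From mathcomp Require Import lra zify.
Import Order.TTheory GRing.Theory Num.Theory numFieldNormedType.Exports.
Set Implicit Arguments.
Unset Strict Implicit.
Unset Printing Implicit Defensive.

Local Open Scope classical_set_scope.
Local Open Scope ring_scope.

Section InnerProduct.
Context {R : realType} {n : nat}.
Local Notation X := 'rV[R]_n.
Implicit Types u w x : X.

Lemma dotvE u w : dotv u w = (u *m w^T) 0 0.
Proof. by rewrite !mxE; apply: eq_bigr => i _; rewrite mxE. Qed.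

Lemma dotvC u w : dotv u w = dotv w u.
Proof. by apply: eq_bigr => i _; rewrite mulrC. Qed.

Lemma dotvDl u w x : dotv (u + w) x = dotv u x + dotv w x.
Proof. by rewrite !dotvE mulmxDl mxE. Qed.

Lemma dotvZl (a : R) u x : dotv (a *: u) x = a * dotv u x.
Proof. by rewrite !dotvE -scalemxAl mxE. Qed.

Lemma dotvNl u x : dotv (- u) x = - dotv u x.
Proof. by rewrite -scaleN1r dotvZl mulN1r. Qed.

Lemma dotvBl u w x : dotv (u - w) x = dotv u x - dotv w x.
Proof. by rewrite dotvDl dotvNl. Qed.

Lemma dotvDr u w x : dotv x (u + w) = dotv x u + dotv x w.
Proof. by rewrite dotvC dotvDl !(dotvC x). Qed.

Lemma dotvZr (a : R) u x : dotv x (a *: u) = a * dotv x u.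
Proof. by rewrite dotvC dotvZl dotvC. Qed.

Lemma dotvBr u w x : dotv x (u - w) = dotv x u - dotv x w.
Proof. by rewrite !(dotvC x) dotvBl. Qed.

Lemma dotv0l x : dotv 0 x = 0.
Proof. by rewrite dotvE mul0mx mxE. Qed.

Lemma dotv_sumr k (c : 'I_k -> R) (v : 'I_k -> X) x :
  dotv x (\sum_(i < k) c i *: v i) = \sum_(i < k) c i * dotv x (v i).
Proof.
elim/big_rec2: _ => [|i y1 y2 _ <-]; first by rewrite dotvC dotv0l.
by rewrite dotvDr dotvZr.
Qed.

Lemma dotv_ge0 u : 0 <= dotv u u.
Proof. by apply: sumr_ge0 => i _; rewrite -expr2 sqr_ge0. Qed.

Lemma coord_sqr_le_dotv u i : u 0 i ^+ 2 <= dotv u u.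
Proof.
rewrite /dotv (bigD1 i) //= expr2 lerDl.
by apply: sumr_ge0 => k _; rewrite -expr2 sqr_ge0.
Qed.

Lemma dotv_gt0 u : u != 0 -> 0 < dotv u u.
Proof.
move=> /eqP u_neq0; rewrite lt_def dotv_ge0 andbT; apply: contra_notN u_neq0.
move=> /eqP u0; apply/rowP => i; rewrite mxE; apply/eqP.
by rewrite -sqrf_eq0 eq_le sqr_ge0 -u0 coord_sqr_le_dotv.
Qed.

Lemma coord_le_norm u i : `|u 0 i| <= `|u|.
Proof. by rewrite [`|u|]mx_normrE; apply/bigmax_geP; right; exists (0, i). Qed.

Lemma unit_norm_le1 u : dotv u u = 1 -> `|u| <= 1.
Proof.
move=> u1; rewrite [`|u|]mx_normrE; apply: bigmax_le => // -[a i] _ /=.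
rewrite (ord1 a) -(ler_pXn2r (n := 2)) ?nnegrE // expr1n real_normK ?num_real //.
by rewrite -u1 coord_sqr_le_dotv.
Qed.

Lemma dotv_norm_le u w : `|dotv u w| <= n%:R * (`|u| * `|w|).
Proof.
apply: (le_trans (ler_norm_sum _ _ _)).
have -> : n%:R * (`|u| * `|w|) = \sum_(i < n) `|u| * `|w|.
  by rewrite sumr_const card_ord mulr_natl.
apply: ler_sum => i _.
by rewrite normrM ler_pM // coord_le_norm.
Qed.

Lemma cvg_dotv {T : Type} (F : set_system T) {FF : Filter F} (f g : T -> X) u w :
  f @ F --> u -> g @ F --> w -> (fun t => dotv (f t) (g t)) @ F --> dotv u w.
Proof.
move=> fu gw; apply: (cvg_big add_continuous) => i _.
by apply: cvgM; [exact: cvg_comp _ _ fu (@coord_continuous R 1 n 0 i u)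
                |exact: cvg_comp _ _ gw (@coord_continuous R 1 n 0 i w)].
Qed.

Lemma dotv_continuousl w : continuous (dotv^~ w).
Proof. by move=> x; apply: (@cvg_dotv _ (nbhs x)) cvg_id (cvg_cst w). Qed.

Lemma closed_dotvl w (A : set R) : closed A -> closed [set x : X | A (dotv x w)].
Proof. exact: (continuous_closedP _).1 (@dotv_continuousl w) A. Qed.

Lemma closed_unit_sphere : closed [set x : X | dotv x x = 1].
Proof.
have dotv_sqr_cont : continuous (fun x : X => dotv x x).
  by move=> x; apply: (@cvg_dotv _ (nbhs x)) cvg_id cvg_id.
exact: (continuous_closedP _).1 dotv_sqr_cont _ (@closed_eq R 1).
Qed.

End InnerProduct.

Section SpanDual.
Context {R : realType} {n : nat}.
Local Notation X := 'rV[R]_n.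
Implicit Types (A : set X) (x y : X).

Lemma mem_span A x : A x -> Defs.span A x.
Proof. by exists 1%N, (fun=> x), (fun=> 1); rewrite big_ord1 scale1r. Qed.

Lemma spanZ A (a : R) x : Defs.span A x -> Defs.span A (a *: x).
Proof.
move=> [k [v [c [Av ->]]]]; exists k, v, (fun i => a * c i); split => //.
by rewrite scaler_sumr; apply: eq_bigr => i _; rewrite scalerA.
Qed.

Lemma spanD A x y : Defs.span A x -> Defs.span A y -> Defs.span A (x + y).
Proof.
move=> [k1 [v1 [c1 [Av1 ->]]]] [k2 [v2 [c2 [Av2 ->]]]].
pose pick T (f1 : 'I_k1 -> T) (f2 : 'I_k2 -> T) (i : 'I_(k1 + k2)) :=
  match fintype.split i with inl i1 => f1 i1 | inr i2 => f2 i2 end.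
exists (k1 + k2)%N, (pick _ v1 v2), (pick _ c1 c2); split.
  by move=> i; rewrite /pick; case: fintype.split.
by rewrite big_split_ord /pick; congr (_ + _); apply: eq_bigr => i _;
  rewrite ?(unsplitK (inl i : 'I_k1 + 'I_k2)) ?(unsplitK (inr i : 'I_k1 + 'I_k2)).
Qed.

Lemma span_rowspace A k (M : 'M[R]_(k, n)) :
  (forall i, A (row i M)) -> (forall y, A y -> (y <= M)%MS) ->
  Defs.span A = [set x | (x <= M)%MS].
Proof.
move=> AM MA; apply/seteqP; split => x /=.
  move=> [m [v [c [Av ->]]]]; apply: summx_sub => i _.
  by apply: scalemx_sub; apply: MA.
move=> /submxP [c ->]; exists k, (fun i => row i M), (fun i => c 0 i).
by rewrite mulmx_sum_row.
Qed.

Lemma closed_rowspace k (M : 'M[R]_(k, n)) : closed [set x : X | (x <= M)%MS].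
Proof.
have dotv_coker x j : dotv x (row j (cokermx M)^T) = (x *m cokermx M) 0 j.
  by rewrite dotvE !mxE; apply: eq_bigr => i _; rewrite !mxE.
have -> : [set x : X | (x <= M)%MS] =
    \bigcap_(j in setT) [set x : X | dotv x (row j (cokermx M)^T) = 0].
  apply/seteqP; split => x /=; rewrite submxE.
    by move=> /eqP xM j _ /=; rewrite dotv_coker xM mxE.
  by move=> xM; apply/eqP/rowP => j; rewrite -dotv_coker mxE; apply: xM.
apply: closed_bigI => j _.
exact: closed_dotvl _ (@closed_eq R 0).
Qed.

Lemma closed_span A k : has_dim A k -> closed (Defs.span A).
Proof. by move=> [M [AM _ MA]]; rewrite (span_rowspace AM MA); apply: closed_rowspace. Qed.

Lemma closed_dual A : closed (dual A).
Proof.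
have -> : dual A = \bigcap_(a in A) [set y | 0 <= dotv y a] by [].
apply: closed_bigI => a _.
exact: closed_dotvl _ (@closed_ge R 0).
Qed.

Lemma closed_dualspan A k : has_dim A k -> closed (dualspan A).
Proof. by move=> dimA; apply: closedI; [apply: closed_dual | apply: closed_span dimA]. Qed.

End SpanDual.

Section Faces.
Context {R : realType} {n : nat}.
Local Notation X := 'rV[R]_n.
Implicit Types x y : X.

Definition convex_cone (C : set X) : Prop :=
  [/\ C 0, forall x y, C x -> C y -> C (x + y) &
      forall (t : R) x, 0 <= t -> C x -> C (t *: x)].

Lemma dual_convex_cone (A : set X) : convex_cone (dual A).
Proof.
split.
- by move=> a _; rewrite dotv0l.
- by move=> x y Ax Ay a Aa; rewrite dotvDl addr_ge0 ?Ax ?Ay.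
- by move=> t x t_ge0 Ax a Aa; rewrite dotvZl mulr_ge0 ?Ax.
Qed.

Variables (C G : set X).
Hypotheses (coneC : convex_cone C) (faceG : is_face C G).

Lemma face_scale_le2 x (t : R) : G x -> 0 <= t <= 2 -> G (t *: x).
Proof.
have [C0 _ CZ] := coneC; have [GC _ _ G_ext] := faceG.
move=> Gx /andP[t_ge0 t_le2].
have C2x : C (2 *: x) by apply: CZ => //; apply: GC.
have := G_ext 0 (2 *: x) C0 C2x.
rewrite add0r scalerA mulVf ?pnatr_eq0 // scale1r => /(_ Gx (t / 2)).
rewrite scaler0 add0r scalerA mulfVK ?pnatr_eq0 //; apply.
by rewrite divr_ge0 //= ler_pdivrMr ?ltr0n // mul1r.
Qed.

Lemma face_scale x (t : R) : G x -> 0 <= t -> G (t *: x).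
Proof.
move=> Gx t_ge0.
suff scale_pow N s : 0 <= s <= 2 ^+ N -> G (s *: x).
  apply: (scale_pow (Num.truncn t).+1); rewrite t_ge0 /=.
  apply: (le_trans (ltW (truncnS_gt t))).
  by rewrite -natrX ler_nat ltnW // ltn_expl.
elim: N s => [|N IHN] s /andP[s_ge0 s_le].
  by apply: face_scale_le2; rewrite // s_ge0 (le_trans s_le) // expr0 ler1n.
have -> : s *: x = 2 *: ((s / 2) *: x) by rewrite scalerA mulrC mulfVK ?pnatr_eq0.
apply: face_scale_le2; last by rewrite ler0n lexx.
by apply: IHN; rewrite divr_ge0 //= ler_pdivrMr ?ltr0n // -exprSr.
Qed.

Lemma face0 : G 0.
Proof. by have [_ [x Gx] _ _] := faceG; rewrite -(scale0r x); apply: face_scale. Qed.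

Lemma faceD x y : G x -> G y -> G (x + y).
Proof.
move=> Gx Gy; have [_ _ convexG _] := faceG.
have half_ge0 : 0 <= (2^-1 : R) <= 1 by rewrite invr_ge0 ler0n invf_le1 ?ler1n ?ltr0n.
have := convexG x y (2^-1) Gx Gy half_ge0.
have -> : 1 - 2^-1 = 2^-1 :> R by lra.
rewrite -scalerDr => /face_scale /(_ (ler0n _ 2)).
by rewrite scalerA mulfV ?pnatr_eq0 // scale1r.
Qed.

Lemma face_nonneg_comb m (M : 'M[R]_(m, n)) (c : 'rV[R]_m) :
  (forall i, G (row i M)) -> (forall i, 0 <= c 0 i) -> G (c *m M).
Proof.
move=> GM c_ge0; rewrite mulmx_sum_row.
by apply: (big_ind G face0 faceD) => i _; apply: face_scale.
Qed.

Lemma face_relint_exists m : has_dim G m -> exists x, relint G x.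
Proof.
move=> [M [GM /row_freeP [B MB] MG]].
pose K : R := \sum_(j < n) \sum_(i < m) `|B j i|.
have K_ge0 : 0 <= K by apply: sumr_ge0 => j _; apply: sumr_ge0.
pose s := (K + 1)^-1.
have s_gt0 : 0 < s by rewrite invr_gt0; lra.
have sK_lt1 : s * K < 1 by rewrite mulrC ltr_pdivrMr; lra.
(* x0 has all coordinates 1 in the basis M, and B reads off coordinates. *)
pose x0 : X := const_mx 1 *m M.
exists x0; split; first by apply: face_nonneg_comb => // i; rewrite mxE.
exists (s ^+ 2); split; first by rewrite exprn_gt0.
move=> y; rewrite (span_rowspace GM MG) => yM y_near.
have -> : y = (y *m B) *m M.
  by case/submxP: yM => c ->; rewrite -[c *m M *m B]mulmxA MB mulmx1.
apply: face_nonneg_comb => // i.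
have -> : y *m B = x0 *m B + (y - x0) *m B by rewrite -mulmxDl addrC subrK.
rewrite -mulmxA MB mulmx1 !mxE.
suff : `|\sum_j (y - x0) 0 j * B j i| < 1 by rewrite ltr_norml; lra.
apply: (le_lt_trans (ler_norm_sum _ _ _)); apply: le_lt_trans sK_lt1.
rewrite mulr_sumr; apply: ler_sum => j _; rewrite normrM; apply: ler_pM => //.
  rewrite -(ler_pXn2r (n := 2)) ?nnegrE ?(ltW s_gt0) // real_normK ?num_real //.
  exact/ltW/(le_lt_trans (coord_sqr_le_dotv _ _)).
by rewrite (bigD1 i) //= lerDl; apply: sumr_ge0.
Qed.

End Faces.

Section NormalRay.
Context {R : realType} {n : nat}.
Local Notation X := 'rV[R]_n.
Implicit Types (E G : set X) (e u x y : X).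

Lemma relint_normal_orth E G x y :
  G `<=` E -> relint G x -> dual E y -> dotv y x = 0 -> orth G y.
Proof.
move=> GE [Gx [r [r_gt0 G_near]]] Ey yx g Gg.
pose D := dotv (x - g) (x - g).
have D_ge0 : 0 <= D := dotv_ge0 _.
pose s := r / (r + D).
have s_gt0 : 0 < s by rewrite divr_gt0 //; lra.
have s_le1 : s <= 1 by rewrite ler_pdivrMr ?mul1r; lra.
have sD_lt : s * D < r by rewrite mulrAC ltr_pdivrMr; nra.
(* Extending the segment [g, x] slightly beyond x stays in G. *)
have Gz : G (x + s *: (x - g)).
  apply: G_near.
    apply: spanD (mem_span Gx) (spanZ _ (spanD (mem_span Gx) _)).
    by rewrite -scaleN1r; apply/spanZ/mem_span.
  rewrite addrC addKr dotvZl dotvZr -/D; nra.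
have := Ey _ (GE _ Gz); rewrite dotvDr dotvZr dotvBr yx.
have := Ey _ (GE _ Gg); nra.
Qed.

Lemma dualspan_pointed E u : dualspan E u -> dual E (- u) -> u = 0.
Proof.
move=> [Eu [k [v [c [Ev u_def]]]]] Enu; apply/eqP; apply: contraT => u_neq0.
have uE a : E a -> dotv u a = 0.
  by move=> Ea; apply/eqP; rewrite eq_le -oppr_ge0 -dotvNl Enu // Eu.
by have := dotv_gt0 u_neq0; rewrite {2}u_def dotv_sumr big1 ?ltxx // => i _; rewrite uE ?mulr0.
Qed.

Definition ray_generator E G e : Prop :=
  dotv e e = 1 /\ dualspan E `&` orth G = [set t *: e | t in [set t : R | 0 <= t]].

Lemma eF_ray_generator E G : (exists e, ray_generator E G e) -> ray_generator E G (eF E G).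
Proof. exact: xgetPex. Qed.

Lemma ray_generator_mem E G e : ray_generator E G e -> dualspan E e /\ orth G e.
Proof.
move=> [_ ray]; have : (dualspan E `&` orth G) e by rewrite ray; exists 1; rewrite ?scale1r /=.
by case.
Qed.

Lemma ray_generator_unique E G e y : ray_generator E G e ->
  dualspan E y -> orth G y -> dotv y y = 1 -> y = e.
Proof.
move=> [e1 ray] Ey Gy; have : (dualspan E `&` orth G) y by [].
rewrite ray => -[t /= t_ge0 <-]; rewrite dotvZl dotvZr e1 mulr1 => tt1.
suff -> : t = 1 by rewrite scale1r.
by apply/eqP; rewrite -(eqrXn2 (n := 2)) ?expr1n ?expr2 ?tt1.
Qed.

Lemma normal_ray_generator E G x : G x ->
  (forall y, dualspan E y -> dotv y x = 0 -> orth G y) ->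
  has_dim [set y | dualspan E y /\ dotv y x = 0] 1 ->
  exists e, ray_generator E G e.
Proof.
move=> Gx normal_orth [M [/(_ 0) Nu /row_freeP [B MB] N_sub]].
set u := row 0 M in Nu.
have Mu : M = u by apply/matrixP => a b; rewrite (ord1 a) mxE.
have u_neq0 : u != 0.
  apply/eqP => u0; move: MB; rewrite Mu u0 mul0mx => /matrixP/(_ 0 0).
  by rewrite !mxE eqxx => /eqP; rewrite eq_sym oner_eq0.
pose r := Num.sqrt (dotv u u).
have r_gt0 : 0 < r by rewrite sqrtr_gt0 dotv_gt0.
exists (r^-1 *: u); split.
  rewrite dotvZl dotvZr mulrA -expr2 exprVn sqr_sqrtr ?dotv_ge0 //.
  by rewrite mulVf // gt_eqF // dotv_gt0.
have [[Eu spanu] ux] := Nu; have Gu := normal_orth u (conj Eu spanu) ux.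
apply/seteqP; split => y /=.
  move=> [[Ey spany] Gy].
  have /sub_rVP [c yc] : (y <= u)%MS by rewrite -Mu; apply: N_sub; split => //; apply: Gy.
  have c_ge0 : 0 <= c.
    rewrite leNgt; apply/negP => c_lt0; move/eqP: u_neq0; apply.
    apply: (@dualspan_pointed E) => // a Ea.
    by rewrite dotvNl oppr_ge0 -(ler_nM2l c_lt0) mulr0 -dotvZl -yc Ey.
  by exists (c * r); [rewrite mulr_ge0 // ltW | rewrite scalerA mulfK ?gt_eqF].
move=> [t t_ge0 <-]; rewrite scalerA.
have tr_ge0 : 0 <= t * r^-1 by rewrite mulr_ge0 // invr_ge0 ltW.
split; [split|].
- by move=> a Ea; rewrite dotvZl mulr_ge0 // Eu.
- exact: spanZ.
- by move=> b Gb; rewrite dotvZl Gu ?mulr0.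
Qed.

End NormalRay.

Section FaceDimensions.
Context {R : realType} {n : nat}.
Local Notation X := 'rV[R]_n.
Variables (C : set X) (ns : seq nat) (j : nat).
Hypotheses (dimsC : face_dim_seq C ns) (j_bounds : (1 <= j <= (size ns).-1)%N).

Lemma Pj_maxdim_below G : Pj C ns j G ->
  maxdim_below C (nth 0 ns ((size ns).-1 - j)) (nth 0 ns ((size ns).-1 - j.-1)).
Proof.
have [sorted_ns dimsP] := dimsC; move: j_bounds => /andP[j_ge1 j_le] PjG.
have sorted_leq : sorted leq ns by move: sorted_ns; rewrite ltn_sorted_uniq_leq => /andP[].
have -> : ((size ns).-1 - j.-1 = ((size ns).-1 - j).+1)%N by lia.
have lt_size : (((size ns).-1 - j).+1 < size ns)%N by lia.
split; [|by exists G|].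
  by apply: (sorted_ltn_nth ltn_trans) => //; rewrite inE //; lia.
move=> H l faceH dimH l_lt; have l_ns : l \in ns by apply/dimsP; exists H.
rewrite -(nth_index 0 l_ns) in l_lt *.
have index_lt := index_mem l ns; rewrite l_ns in index_lt.
have [index_le|index_gt] := leqP (index l ns) ((size ns).-1 - j).
  by apply: (sorted_leq_nth leq_trans leqnn) => //; rewrite inE //; lia.
have : (nth 0 ns ((size ns).-1 - j).+1 <= nth 0 ns (index l ns))%N.
  by apply: (sorted_leq_nth leq_trans leqnn) => //; rewrite inE.
by rewrite leqNgt l_lt.
Qed.

Lemma Pcal_modular_face E G : Pcal C ns j (E, G) -> modular_face C E.
Proof.
move=> [[faceE dimE] PjG GE]; split => //.
by do 2 eexists; split; [exact: dimE | exact: Pj_maxdim_below PjG | exists G; case: PjG].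
Qed.

Lemma Pcal_ray_generator E G : convex_cone C -> locally_smooth C ->
  Pcal C ns j (E, G) -> ray_generator E G (eF E G).
Proof.
move=> coneC smoothC EG; apply: eF_ray_generator.
have [[_ dimE] [faceG dimG] GE] := EG.
have [x relx] := face_relint_exists coneC faceG dimG.
have [_ regx] := smoothC E (Pcal_modular_face EG) _ _ dimE
  (Pj_maxdim_below (conj faceG dimG)) G faceG GE dimG x relx.
apply: (normal_ray_generator relx.1) regx => y [Ey _].
exact: relint_normal_orth GE relx Ey.
Qed.

End FaceDimensions.

Section FellLimits.
Context {R : realType} {n : nat}.
Local Notation X := 'rV[R]_n.
Implicit Types (F : set X) (G : nat -> set X) (g : nat -> X).

Lemma fell_nbhs_meets (A U : set X) :
  open U -> A `&` U !=set0 -> nbhs (A : fell) [set B : fell | B `&` U !=set0].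
Proof.
move=> U_open AU; apply: open_nbhs_nbhs; split => //.
exists [set fell_b (false, U)]; last by rewrite bigcup_set1.
by move=> _ ->; apply: (@finI_from1 _ _ fell_D fell_b (false, U)).
Qed.

Lemma fell_lim_approx G F f (d : R) :
  (fun k => G k : fell) @ \oo --> (F : fell) -> F f -> 0 < d ->
  \forall k \near \oo, exists2 f', G k f' & `|f - f'| < d.
Proof.
move=> GF Ff d_gt0.
have F_meets : F `&` ball f d !=set0 by exists f; split => //; apply: ballxx.
have meets := GF _ (fell_nbhs_meets (ball_open f d) F_meets).
near=> k; have [f' [Gf' ff']] : G k `&` ball f d !=set0 by near: k.
by exists f'; rewrite // -ball_normE in ff'.
Unshelve. all: by end_near. Qed.

Lemma fell_lim_dotv_approx G F g (B e : R) f :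
  (fun k => G k : fell) @ \oo --> (F : fell) -> F f -> 0 <= B -> 0 < e ->
  (\forall k \near \oo, `|g k| <= B) ->
  \forall k \near \oo, exists2 f', G k f' & `|dotv (g k) f - dotv (g k) f'| <= e.
Proof.
move=> GF Ff B_ge0 e_gt0 g_bounded.
have nB_ge0 : 0 <= n%:R * B by rewrite mulr_ge0.
pose d := e / (n%:R * B + 1).
have d_gt0 : 0 < d by rewrite divr_gt0 //; lra.
have nBd_le : n%:R * B * d <= e.
  by rewrite /d mulrA ler_pdivrMr; [nra | lra].
have approx := fell_lim_approx GF Ff d_gt0.
near=> k; have [f' Gf' ff'] : exists2 f', G k f' & `|f - f'| < d by near: k.
exists f' => //; rewrite -dotvBr (le_trans (dotv_norm_le _ _)) // (le_trans _ nBd_le) //.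
rewrite -mulrA ler_wpM2l //; apply: ler_pM => //; last exact: ltW.
near: k; exact: g_bounded.
Unshelve. all: by end_near. Qed.

Lemma cluster_closed g (A : set X) p :
  closed A -> (\forall k \near \oo, A (g k)) -> cluster (g @ \oo) p -> A p.
Proof. by move=> A_closed gA; rewrite clusterE => /(_ _ gA); apply: A_closed. Qed.

Lemma fell_lim_cluster_orth G F g (B : R) p :
  (fun k => G k : fell) @ \oo --> (F : fell) -> 0 <= B ->
  (\forall k \near \oo, `|g k| <= B) -> (\forall k \near \oo, orth (G k) (g k)) ->
  cluster (g @ \oo) p -> orth F p.
Proof.
move=> GF B_ge0 g_bounded gG p_cluster f Ff.
apply/eqP; rewrite -normr_le0; apply/ler_addgt0Pr => e e_gt0; rewrite add0r.
have dotv_norm_cont : continuous (fun x : X => `|dotv x f|).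
  by move=> x; apply: cvg_norm (@dotv_continuousl _ _ f x).
have A_closed : closed [set x : X | `|dotv x f| <= e].
  exact: (continuous_closedP _).1 dotv_norm_cont _ (@closed_le R e).
apply: (cluster_closed A_closed _ p_cluster).
have approx := fell_lim_dotv_approx GF Ff B_ge0 e_gt0 g_bounded.
near=> k; have gGk : orth (G k) (g k) by near: k.
have [f' Gf'] : exists2 f', G k f' & `|dotv (g k) f - dotv (g k) f'| <= e by near: k.
by rewrite /= (gGk f' Gf') subr0.
Unshelve. all: by end_near.
Qed.

Lemma fell_lim_cvg_dotv_ge0 G F g v :
  (fun k => G k : fell) @ \oo --> (F : fell) -> g @ \oo --> v ->
  (\forall k \near \oo, forall f', G k f' -> 0 <= dotv (g k) f') ->
  forall f, F f -> 0 <= dotv v f.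
Proof.
move=> GF gv gG f Ff.
have [M [_ g_bounded]] := cvg_bounded _ _ gv.
have M_lt : M < `|M| + 1 by rewrite (le_lt_trans (ler_norm M)) ?ltrDl.
apply/ler_addgt0Pr => e e_gt0; rewrite -lerBlDr sub0r.
have gf_cvg : (fun k => dotv (g k) f) @ \oo --> dotv v f.
  exact: cvg_dotv gv (cvg_cst f).
apply: (closed_cvg _ (@closed_ge R (- e)) _ _ gf_cvg).
have := fell_lim_dotv_approx GF Ff (ler_wpDl (normr_ge0 M) ler01) e_gt0 (g_bounded _ M_lt).
apply: filterS2 gG => k gGk [f' Gf'] /=; have := gGk f' Gf'.
by rewrite ler_norml => ? /andP[? _]; lra.
Qed.

End FellLimits.

Section Limits.
Context {R : realType} {n : nat}.
Local Notation X := 'rV[R]_n.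
Implicit Types (E F : set X) (G : nat -> set X) (g : nat -> X).

Lemma unit_seq_cluster_cvg g e0 : (forall k, dotv (g k) (g k) = 1) ->
  (forall p, cluster (g @ \oo) p -> p = e0) -> g @ \oo --> e0.
Proof.
move=> g_unit cluster_e0.
(* A compact box that is a neighbourhood of the unit sphere. *)
pose V := [set x : X | forall i, `[(-2 : R), 2]%classic (x ord0 i)].
have V_compact : compact V.
  exact: (@rV_compact _ n (fun=> `[(-2 : R), 2]%classic) (fun=> @segment_compact R _ _)).
have norm_le2_V x : `|x| <= 2 -> V x.
  move=> x_le2 i; rewrite /= in_itv /= -ler_norml.
  exact: le_trans (coord_le_norm _ _) x_le2.
have gV : \forall k \near \oo, V (g k).
  by apply: nearW => k; apply: norm_le2_V; rewrite (le_trans (unit_norm_le1 (g_unit k))) ?ler1n.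
have [p [_ p_cluster]] := V_compact (g @ \oo) _ gV.
have p_unit : dotv p p = 1.
  by apply: (cluster_closed closed_unit_sphere _ p_cluster); apply: nearW.
have p_e0 := cluster_e0 p p_cluster; subst p.
apply: (compact_cluster_set1 _ V_compact) => //.
  apply: filterS (nbhsx_ballx e0 1 ltr01) => y; rewrite -ball_normE /= => y_near.
  apply: norm_le2_V; rewrite -[y](subrK e0) (le_trans (ler_normD _ _)) //.
  by rewrite distrC in y_near; have := unit_norm_le1 p_unit; lra.
by apply/seteqP; split => [q /cluster_e0 ->|q ->].
Qed.

Lemma ray_generator_cvg E F G g e0 m : has_dim E m ->
  (forall k, ray_generator E (G k) (g k)) -> ray_generator E F e0 ->
  (fun k => G k : fell) @ \oo --> (F : fell) -> g @ \oo --> e0.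
Proof.
move=> dimE g_gen e0_gen GF; have g_unit k := (g_gen k).1.
apply: unit_seq_cluster_cvg => // p p_cluster; apply: (ray_generator_unique e0_gen).
- apply: (cluster_closed (closed_dualspan dimE) _ p_cluster).
  by apply: nearW => k; apply: (ray_generator_mem (g_gen k)).1.
- apply: (fell_lim_cluster_orth GF ler01 _ _ p_cluster).
    by apply: nearW => k; apply: unit_norm_le1.
  by apply: nearW => k; apply: (ray_generator_mem (g_gen k)).2.
- by apply: (cluster_closed closed_unit_sphere _ p_cluster); apply: nearW.
Qed.

Lemma secant_lim_dual_ge0 E F G g0 g1 (c : nat -> R) v :
  (forall k, G k `<=` E) -> (forall k, 0 <= c k) ->
  (forall k, dual E (g0 k)) -> (forall k, orth (G k) (g1 k)) ->
  (fun k => G k : fell) @ \oo --> (F : fell) ->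
  (fun k => c k *: (g0 k - g1 k)) @ \oo --> v ->
  forall f, F f -> 0 <= dotv v f.
Proof.
move=> GE c_ge0 g0E g1G GF secant_cvg; apply: fell_lim_cvg_dotv_ge0 GF secant_cvg _.
apply: nearW => k f' Gf'.
by rewrite dotvZl dotvBl (g1G k f' Gf') subr0 mulr_ge0 // g0E //; apply: GE Gf'.
Qed.

Lemma secant_lim_orth_face E F G0 G1 g0 g1 (c : nat -> R) v :
  (forall k, G0 k `<=` E) -> (forall k, G1 k `<=` E) -> (forall k, 0 <= c k) ->
  (forall k, dual E (g0 k)) -> (forall k, dual E (g1 k)) ->
  (forall k, orth (G0 k) (g0 k)) -> (forall k, orth (G1 k) (g1 k)) ->
  (fun k => G0 k : fell) @ \oo --> (F : fell) ->
  (fun k => G1 k : fell) @ \oo --> (F : fell) ->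
  (fun k => c k *: (g0 k - g1 k)) @ \oo --> v -> orth F v.
Proof.
move=> G0E G1E c_ge0 g0E g1E g0G0 g1G1 G0F G1F secant_cvg f Ff.
apply/eqP; rewrite eq_le; apply/andP; split.
  rewrite -oppr_ge0 -dotvNl; apply: secant_lim_dual_ge0 G0E c_ge0 g1E g0G0 G0F _ _ Ff.
  under eq_fun do rewrite -opprB scalerN.
  exact: cvgN.
exact: secant_lim_dual_ge0 G1E c_ge0 g0E g1G1 G1F secant_cvg _ Ff.
Qed.

Lemma secant_lim_unit_orth g0 g1 (c : nat -> R) e v :
  (forall k, dotv (g0 k) (g0 k) = 1) -> (forall k, dotv (g1 k) (g1 k) = 1) ->
  g0 @ \oo --> e -> g1 @ \oo --> e ->
  (fun k => c k *: (g0 k - g1 k)) @ \oo --> v -> dotv v e = 0.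
Proof.
move=> g0_unit g1_unit g0e g1e secant_cvg.
(* (g0 - g1) . (g0 + g1) = |g0|^2 - |g1|^2 = 0 *)
have sum_cvg : (fun k => dotv (c k *: (g0 k - g1 k)) (g0 k + g1 k)) @ \oo --> dotv v (e + e).
  exact: cvg_dotv secant_cvg (cvgD g0e g1e).
have : dotv v (e + e) = 0.
  apply: (closed_cvg _ (@closed_eq R 0) _ _ sum_cvg); apply: nearW => k /=.
  by rewrite dotvZl dotvBl !dotvDr g0_unit g1_unit (dotvC (g1 k)) [_ + 1]addrC subrr mulr0.
by rewrite dotvDr; lra.
Qed.

End Limits.

Theorem mainTheorem13 (R : realType) (n : nat) (Om : set 'rV[R]_n)
  (ns : seq nat) (j : nat) (E F : set 'rV[R]_n)
  (F0 F1 : nat -> set 'rV[R]_n) (eps : nat -> R) (v : 'rV[R]_n) :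
  closed_convex_cone Om -> pointed_cone Om -> solid Om ->
  face_dim_seq (dual Om) ns ->
  facially_compact (dual Om) ns -> locally_smooth (dual Om) ->
  (1 <= j <= (size ns).-1)%N ->
  Pcal (dual Om) ns j (E, F) ->
  (forall k, Pcal (dual Om) ns j (E, F0 k)) ->
  (forall k, Pcal (dual Om) ns j (E, F1 k)) ->
  (fun k => (F0 k : fell)) @ \oo --> (F : fell) ->
  (fun k => (F1 k : fell)) @ \oo --> (F : fell) ->
  (forall k, 0 < eps k) -> eps @ \oo --> 0 ->
  (fun k => (eps k)^-1 *: (eF E (F0 k) - eF E (F1 k))) @ \oo --> v ->
  Ehalf E F v.
Proof.
move=> _ _ _ dims _ smooth j_bounds EF EF0 EF1 F0F F1F eps_gt0 _ secant_cvg.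
have gen G : Pcal (dual Om) ns j (E, G) -> ray_generator E G (eF E G).
  exact: (Pcal_ray_generator dims j_bounds (dual_convex_cone Om) smooth).
have mem G EG := ray_generator_mem (gen G EG).
have [[_ dimE] _ _] := EF.
have e0_cvg := ray_generator_cvg dimE (fun k => gen _ (EF0 k)) (gen _ EF) F0F.
have e1_cvg := ray_generator_cvg dimE (fun k => gen _ (EF1 k)) (gen _ EF) F1F.
have inv_eps_ge0 k : 0 <= (eps k)^-1 by rewrite invr_ge0 ltW.
split; [split|].
- apply: (closed_cvg _ (closed_span dimE) _ _ secant_cvg); apply: nearW => k /=.
  apply/spanZ/spanD; first exact: (mem _ (EF0 k)).1.2.
  by rewrite -scaleN1r; apply/spanZ; exact: (mem _ (EF1 k)).1.2.
- apply: (secant_lim_orth_face (E := E) _ _ inv_eps_ge0 _ _ _ _ F0F F1F secant_cvg).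
  + by move=> k; case: (EF0 k).
  + by move=> k; case: (EF1 k).
  + by move=> k; apply: (mem _ (EF0 k)).1.1.
  + by move=> k; apply: (mem _ (EF1 k)).1.1.
  + by move=> k; apply: (mem _ (EF0 k)).2.
  + by move=> k; apply: (mem _ (EF1 k)).2.
- move=> _ ->; apply: secant_lim_unit_orth e0_cvg e1_cvg secant_cvg.
  + by move=> k; apply: (gen _ (EF0 k)).1.
  + by move=> k; apply: (gen _ (EF1 k)).1.
Qed.
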